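(* Let $H$ be a subgroup of $B_\infty(D)$ such that $P_\infty(D)\subsetneq H\subset B_\infty(D)$. Then $H$ is not bi-orderable.
   Context: $B_n(D)$ is the Artin braid group on $n$ strands, with generators $\sigma_1,\dots,\sigma_{n-1}$ and relations $\sigma_i\sigma_j=\sigma_j\sigma_i$ for $|i-j|\ge 2$ and $\sigma_i\sigma_{i+1}\sigma_i=\sigma_{i+1}\sigma_i\sigma_{i+1}$; $P_n(D)$ is the kernel of the permutation homomorphism $B_n(D)\to S_n$, $\sigma_i\mapsto(i,i+1)$. The infinite braid group $B_\infty(D)$ is the direct limit of the groups $B_n(D)$ under the injective homomorphisms $\iota: B_n(D)\to B_{n+1}(D)$, $\iota(\sigma_i)=\sigma_i$; $P_\infty(D)$ is the direct limit of the $P_n(D)$ under the restrictions of $\iota$ (equivalently, the kernel of the induced permutation homomorphism from $B_\infty(D)$ to the group of finitely supported permutations of the positive integers). A group is bi-orderable if it admits a strict total ordering invariant under both left and right multiplication. *)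

(* The infinite braid group B_oo(D) is modelled by its standard
   presentation: words in the generators sigma_{i+1} (i : nat) and their
   inverses, modulo the congruence generated by free cancellation and the
   Artin braid relations.  Group elements are equivalence classes of words;
   subsets / orders are required to respect the equivalence. *)
From Stdlib Require Import List Arith Bool.
Import ListNotations.

(* (i, true) stands for sigma_{i+1}, (i, false) for sigma_{i+1}^{-1}. *)
Definition letter := (nat * bool)%type.
Definition word := list letter.

Definition winv (w : word) : word :=
  rev (map (fun l => (fst l, negb (snd l))) w).

Inductive braid_rel : word -> word -> Prop :=
| br_cancel : forall i b, braid_rel [(i, b); (i, negb b)] []
| br_comm : forall i j, i + 2 <= j \/ j + 2 <= i ->
    braid_rel [(i, true); (j, true)] [(j, true); (i, true)]
| br_braid : forall i,
    braid_rel [(i, true); (S i, true); (i, true)]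
              [(S i, true); (i, true); (S i, true)].

Inductive beq : word -> word -> Prop :=
| beq_refl : forall w, beq w w
| beq_sym : forall w1 w2, beq w1 w2 -> beq w2 w1
| beq_trans : forall w1 w2 w3, beq w1 w2 -> beq w2 w3 -> beq w1 w3
| beq_step : forall u v r1 r2, braid_rel r1 r2 -> beq (u ++ r1 ++ v) (u ++ r2 ++ v).

(* Permutation homomorphism: sigma_{i+1} |-> transposition (i, i+1)
   (0-indexed positions). *)
Definition transp (i k : nat) : nat :=
  if k =? i then S i else if k =? S i then i else k.

Definition perm_of (w : word) (k : nat) : nat :=
  fold_right (fun l acc => transp (fst l) acc) k w.

Definition pure (w : word) : Prop := forall k, perm_of w k = k.

Definition is_subgroup (H : word -> Prop) : Prop :=
  (forall w1 w2, beq w1 w2 -> H w1 -> H w2) /\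
  H [] /\
  (forall w1 w2, H w1 -> H w2 -> H (w1 ++ w2)) /\
  (forall w, H w -> H (winv w)).

Definition bi_orderable (H : word -> Prop) : Prop :=
  exists lt : word -> word -> Prop,
    (forall x x' y y', beq x x' -> beq y y' -> lt x y -> lt x' y') /\
    (forall x, H x -> ~ lt x x) /\
    (forall x y z, H x -> H y -> H z -> lt x y -> lt y z -> lt x z) /\
    (forall x y, H x -> H y -> beq x y \/ lt x y \/ lt y x) /\
    (forall x y z, H x -> H y -> H z -> lt x y -> lt (z ++ x) (z ++ y)) /\
    (forall x y z, H x -> H y -> H z -> lt x y -> lt (x ++ z) (y ++ z)).

(* In a bi-orderable group, roots are unique: if x ^ k commutes with y then
   y x y^-1 and x have the same k-th power, hence are equal, so x commutes with y.
   Now let w in H be non-pure and pick a cycle of its permutation.  Multiplying w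
   by a pure braid gives c in H which, up to a conjugation by some b, is a
   positive braid c1 on the first strands followed by a braid on strands far to
   the right, where c1 moves the strands of the cycle like w does and some power
   c1 ^ k commutes with sigma_1: for a p-cycle with p >= 3 take
   c1 = sigma_1 ... sigma_(p-1) and k = p, for a transposition take the half twist
   on three strands with a fixed strand in the middle and k = 2.  Hence c ^ k
   commutes with the pure braid y = b sigma_1^2 b^-1, and so does c.  But c moves
   the two strands twisted by y to a different pair of strands, so the linking
   number of these two strands differs in c y and y c. *)

From Stdlib Require Import List Bool Lia ZArith Setoid Classical Wf_nat.
Import ListNotations.

Notation gen i := (i, true).

Definition far (i j : nat) : Prop := i + 2 <= j \/ j + 2 <= i.

Lemma beq_app_l (u u' v : word) : beq u u' -> beq (v ++ u) (v ++ u').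
Proof.
  induction 1.
  - apply beq_refl.
  - now apply beq_sym.
  - eapply beq_trans; eauto.
  - rewrite !(app_assoc v). now apply beq_step.
Qed.

Lemma beq_app_r (u u' v : word) : beq u u' -> beq (u ++ v) (u' ++ v).
Proof.
  induction 1.
  - apply beq_refl.
  - now apply beq_sym.
  - eapply beq_trans; eauto.
  - rewrite <- !app_assoc. now apply beq_step.
Qed.

Add Parametric Relation : word beq
  reflexivity proved by beq_refl
  symmetry proved by beq_sym
  transitivity proved by beq_trans
  as beq_setoid.

Add Parametric Morphism : (@app letter) with signature beq ==> beq ==> beq as app_mor.
Proof.
  intros x y Hxy x' y' Hxy'. transitivity (y ++ x').
  - now apply beq_app_r.
  - now apply beq_app_l.
Qed.

Add Parametric Morphism (l : letter) : (@cons letter l) with signature beq ==> beq as cons_mor.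
Proof. intros x y Hxy. exact (beq_app_l x y [l] Hxy). Qed.

Lemma beq_cancel (i : nat) (b : bool) (r : word) : beq ((i, b) :: (i, negb b) :: r) r.
Proof. exact (beq_step [] r _ _ (br_cancel i b)). Qed.

Lemma beq_cancel_neg (i : nat) (b : bool) (r : word) : beq ((i, negb b) :: (i, b) :: r) r.
Proof.
  pose proof (beq_step [] r _ _ (br_cancel i (negb b))) as E.
  now rewrite negb_involutive in E.
Qed.

Lemma beq_braid (i : nat) (r : word) :
  beq (gen i :: gen (S i) :: gen i :: r) (gen (S i) :: gen i :: gen (S i) :: r).
Proof. exact (beq_step [] r _ _ (br_braid i)). Qed.

Lemma winv_cons (l : letter) (u : word) : winv (l :: u) = winv u ++ [(fst l, negb (snd l))].
Proof. reflexivity. Qed.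

Lemma winv_r (u : word) : beq (u ++ winv u) [].
Proof.
  induction u as [|[i b] u IH]; [reflexivity|].
  cbn [app]. rewrite winv_cons, app_assoc, IH. apply (beq_cancel i b []).
Qed.

Lemma winv_l (u : word) : beq (winv u ++ u) [].
Proof.
  induction u as [|[i b] u IH]; [reflexivity|].
  rewrite winv_cons, <- app_assoc. cbn [app fst snd].
  rewrite beq_cancel_neg. apply IH.
Qed.

Fixpoint wpow (x : word) (n : nat) : word :=
  match n with 0 => [] | S n => x ++ wpow x n end.

Lemma in_wpow (x : word) (n : nat) (l : letter) : In l (wpow x n) -> In l x.
Proof.
  induction n as [|n IH]; cbn; [tauto|].
  intros Hl. apply in_app_or in Hl as [Hl|Hl]; auto.
Qed.

Lemma wpow_conj (b x : word) (n : nat) :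
  beq (wpow (b ++ x ++ winv b) n) (b ++ wpow x n ++ winv b).
Proof.
  induction n as [|n IH]; cbn [wpow].
  - symmetry. apply winv_r.
  - rewrite IH, <- !app_assoc, (app_assoc (winv b) b), winv_l. reflexivity.
Qed.

Section Subgroup.

Variable H : word -> Prop.
Hypothesis HS : is_subgroup H.

Lemma is_subgroup_beq (w1 w2 : word) : beq w1 w2 -> H w1 -> H w2.
Proof. apply HS. Qed.

Lemma is_subgroup_nil : H [].
Proof. apply HS. Qed.

Lemma is_subgroup_app (w1 w2 : word) : H w1 -> H w2 -> H (w1 ++ w2).
Proof. apply HS. Qed.

Lemma is_subgroup_winv (w : word) : H w -> H (winv w).
Proof. apply HS. Qed.

Lemma is_subgroup_wpow (x : word) (n : nat) : H x -> H (wpow x n).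
Proof.
  intros Hx. induction n; cbn [wpow].
  - apply is_subgroup_nil.
  - now apply is_subgroup_app.
Qed.

End Subgroup.

Lemma transp_cases (i k : nat) :
  (k = i /\ transp i k = S i) \/ (k = S i /\ transp i k = i) \/
  (k <> i /\ k <> S i /\ transp i k = k).
Proof.
  unfold transp. destruct (Nat.eqb_spec k i); [now left|].
  destruct (Nat.eqb_spec k (S i)); right; [left|right]; auto.
Qed.

Ltac destruct_transp :=
  repeat match goal with
  | |- context [transp ?i ?k] =>
      let E := fresh in
      destruct (transp_cases i k) as [[? E]|[[? E]|[? [? E]]]]; rewrite E in *; clear E
  | _ : context [transp ?i ?k] |- _ =>
      let E := fresh in
      destruct (transp_cases i k) as [[? E]|[[? E]|[? [? E]]]]; rewrite E in *; clear E
  end.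

Lemma transp_involutive (i k : nat) : transp i (transp i k) = k.
Proof. destruct_transp; lia. Qed.

Lemma perm_of_app (u v : word) (k : nat) : perm_of (u ++ v) k = perm_of u (perm_of v k).
Proof. unfold perm_of. now rewrite fold_right_app. Qed.

Lemma perm_of_cons (l : letter) (u : word) (k : nat) :
  perm_of (l :: u) k = transp (fst l) (perm_of u k).
Proof. reflexivity. Qed.

Lemma perm_of_winv (u : word) (k : nat) : perm_of (winv u) k = perm_of (rev u) k.
Proof.
  unfold winv. rewrite <- map_rev.
  assert (Hmap : forall s : word, perm_of (map (fun l => (fst l, negb (snd l))) s) k = perm_of s k).
  { unfold perm_of. induction s as [|l s IH]; cbn; [reflexivity|now rewrite IH]. }
  apply Hmap.
Qed.

Lemma perm_of_winv_l (u : word) (k : nat) : perm_of (winv u) (perm_of u k) = k.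
Proof.
  rewrite perm_of_winv. revert k.
  induction u as [|l u IH]; intros k; [reflexivity|].
  cbn [rev]. rewrite perm_of_app, !perm_of_cons. cbn [perm_of fold_right].
  rewrite transp_involutive. apply IH.
Qed.

Lemma perm_of_winv_r (u : word) (k : nat) : perm_of u (perm_of (winv u) k) = k.
Proof.
  rewrite perm_of_winv. revert k.
  induction u as [|l u IH]; intros k; [reflexivity|].
  cbn [rev]. rewrite perm_of_app, perm_of_cons, (perm_of_cons l []).
  rewrite IH. apply transp_involutive.
Qed.

Lemma perm_of_inj (u : word) (a b : nat) : perm_of u a = perm_of u b -> a = b.
Proof.
  intros E. now rewrite <- (perm_of_winv_l u a), <- (perm_of_winv_l u b), E.
Qed.

Lemma perm_of_conj (b x : word) (k : nat) :
  perm_of (b ++ x ++ winv b) k = perm_of b (perm_of x (perm_of (winv b) k)).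
Proof. now rewrite !perm_of_app. Qed.

Lemma perm_of_fix_above (u : word) (N : nat) :
  (forall l, In l u -> fst l + 1 < N) -> forall k, N <= k -> perm_of u k = k.
Proof.
  induction u as [|[i b] u IH]; intros Hu k Hk; [reflexivity|].
  rewrite perm_of_cons, IH; [| intros; apply Hu; now right | exact Hk].
  assert (i + 1 < N) by (apply (Hu (i, b)); now left). cbn [fst]. destruct_transp; lia.
Qed.

Lemma perm_of_fix_below (u : word) (L : nat) :
  (forall l, In l u -> L <= fst l) -> forall k, k < L -> perm_of u k = k.
Proof.
  induction u as [|[i b] u IH]; intros Hu k Hk; [reflexivity|].
  rewrite perm_of_cons, IH; [| intros; apply Hu; now right | exact Hk].
  assert (L <= i) by (apply (Hu (i, b)); now left). cbn [fst]. destruct_transp; lia.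
Qed.

Lemma perm_of_finite_support (u : word) : exists N, forall k, N <= k -> perm_of u k = k.
Proof.
  assert (Hb : exists N, forall l, In l u -> fst l + 1 < N).
  { induction u as [|l u [N HN]]; [now exists 0|].
    exists (N + fst l + 2). intros l' [<-|Hl]; [lia|]. specialize (HN l' Hl). lia. }
  destruct Hb as [N HN]. exists N. now apply perm_of_fix_above.
Qed.

Lemma fix_above_lt (g : nat -> nat) (N k : nat) :
  (forall a b, g a = g b -> a = b) -> (forall q, N <= q -> g q = q) ->
  k < N -> g k < N.
Proof.
  intros Hinj Hfix Hk. destruct (le_lt_dec N (g k)) as [Hle|]; [|assumption].
  exfalso. specialize (Hinj _ _ (Hfix _ Hle)). lia.
Qed.

Lemma braid_rel_perm_of (r1 r2 : word) :
  braid_rel r1 r2 -> forall k, perm_of r1 k = perm_of r2 k.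
Proof. destruct 1; intros k; cbn; destruct_transp; lia. Qed.

Definition same_pair (P Q x y : nat) : bool :=
  ((x =? P) && (y =? Q)) || ((x =? Q) && (y =? P)).

Lemma same_pair_sym (P Q x y : nat) : same_pair P Q x y = same_pair P Q y x.
Proof. unfold same_pair. destruct (x =? P), (y =? Q), (x =? Q), (y =? P); reflexivity. Qed.

(* Linking number of the strands labelled [P] and [Q]: the signed count of the
   crossings between them, the strand at position [k] being initially labelled
   [lab k]. *)
Fixpoint lk (P Q : nat) (w : word) (lab : nat -> nat) : Z :=
  match w with
  | [] => 0%Z
  | (i, b) :: w' =>
      ((if same_pair P Q (lab i) (lab (S i)) then (if b then 1 else -1) else 0)
       + lk P Q w' (fun k => lab (transp i k)))%Z
  end.

Lemma lk_ext (P Q : nat) (w : word) (lab lab' : nat -> nat) :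
  (forall k, lab k = lab' k) -> lk P Q w lab = lk P Q w lab'.
Proof.
  revert lab lab'. induction w as [|[i b] w IH]; intros lab lab' E; cbn; [reflexivity|].
  rewrite !E. f_equal. apply IH. intros; apply E.
Qed.

Lemma lk_app (P Q : nat) (u v : word) (lab : nat -> nat) :
  lk P Q (u ++ v) lab = (lk P Q u lab + lk P Q v (fun k => lab (perm_of u k)))%Z.
Proof.
  revert lab. induction u as [|[i b] u IH]; intros lab; cbn [app lk].
  - now apply lk_ext.
  - rewrite IH, Z.add_assoc. reflexivity.
Qed.

Lemma braid_rel_lk (r1 r2 : word) :
  braid_rel r1 r2 -> forall P Q lab, lk P Q r1 lab = lk P Q r2 lab.
Proof.
  destruct 1 as [i b | i j Hij | i]; intros P Q lab; cbn.
  - rewrite (same_pair_sym P Q (lab (transp i i))).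
    replace (transp i i) with (S i) by (destruct_transp; lia).
    replace (transp i (S i)) with i by (destruct_transp; lia).
    destruct b, (same_pair _ _ _ _); cbn; lia.
  - replace (transp i j) with j by (destruct_transp; lia).
    replace (transp i (S j)) with (S j) by (destruct_transp; lia).
    replace (transp j i) with i by (destruct_transp; lia).
    replace (transp j (S i)) with (S i) by (destruct_transp; lia).
    lia.
  - replace (transp i (S i)) with i by (destruct_transp; lia).
    replace (transp i (S (S i))) with (S (S i)) by (destruct_transp; lia).
    replace (transp (S i) i) with i by (destruct_transp; lia).
    replace (transp (S i) (S i)) with (S (S i)) by (destruct_transp; lia).
    replace (transp (S i) (S (S i))) with (S i) by (destruct_transp; lia).
    replace (transp i i) with (S i) by (destruct_transp; lia).
    replace (transp i (S (S i))) with (S (S i)) by (destruct_transp; lia).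
    destruct (same_pair P Q (lab i) (lab (S i))), (same_pair P Q (lab i) (lab (S (S i)))),
      (same_pair P Q (lab (S i)) (lab (S (S i)))); lia.
Qed.

Lemma beq_lk (w1 w2 : word) : beq w1 w2 -> forall P Q lab, lk P Q w1 lab = lk P Q w2 lab.
Proof.
  induction 1 as [| w1 w2 _ IH | w1 w2 w3 _ IH1 _ IH2 | u v r1 r2 Hr]; intros P Q lab.
  - reflexivity.
  - now rewrite IH.
  - now rewrite IH1, IH2.
  - rewrite !lk_app, (braid_rel_lk _ _ Hr). f_equal. f_equal. apply lk_ext.
    intros k. now rewrite (braid_rel_perm_of _ _ Hr).
Qed.

Definition commuting (x y : word) : Prop := beq (x ++ y) (y ++ x).

Section BiOrder.

Variable H : word -> Prop.
Hypothesis HS : is_subgroup H.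
Variable lt : word -> word -> Prop.
Hypothesis lt_compat : forall x x' y y', beq x x' -> beq y y' -> lt x y -> lt x' y'.
Hypothesis lt_irrefl : forall x, H x -> ~ lt x x.
Hypothesis lt_trans : forall x y z, H x -> H y -> H z -> lt x y -> lt y z -> lt x z.
Hypothesis lt_total : forall x y, H x -> H y -> beq x y \/ lt x y \/ lt y x.
Hypothesis lt_mul_l : forall x y z, H x -> H y -> H z -> lt x y -> lt (z ++ x) (z ++ y).
Hypothesis lt_mul_r : forall x y z, H x -> H y -> H z -> lt x y -> lt (x ++ z) (y ++ z).

Lemma lt_wpow (x z : word) (n : nat) :
  H x -> H z -> lt x z -> lt (wpow x (S n)) (wpow z (S n)).
Proof.
  intros Hx Hz Hxz. induction n as [|n IH].
  - cbn. rewrite !app_nil_r. exact Hxz.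
  - change (lt (x ++ wpow x (S n)) (z ++ wpow z (S n))).
    assert (Hxn := is_subgroup_wpow H HS x (S n) Hx).
    assert (Hzn := is_subgroup_wpow H HS z (S n) Hz).
    apply lt_trans with (x ++ wpow z (S n)).
    + now apply (is_subgroup_app H HS).
    + now apply (is_subgroup_app H HS).
    + now apply (is_subgroup_app H HS).
    + now apply lt_mul_l.
    + now apply lt_mul_r.
Qed.

(* [y x y^-1] and [x] have the same [k]-th power, and bi-ordered groups have unique roots. *)
Lemma commuting_of_commuting_wpow (x y : word) (k : nat) :
  H x -> H y -> 1 <= k -> commuting (wpow x k) y -> commuting x y.
Proof.
  unfold commuting. intros Hx Hy Hk Hc. set (z := y ++ x ++ winv y).
  assert (Hz : H z).
  { apply (is_subgroup_app H HS); auto.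
    apply (is_subgroup_app H HS); auto. now apply (is_subgroup_winv H HS). }
  assert (Ezx : beq (wpow z k) (wpow x k)).
  { unfold z. rewrite wpow_conj, app_assoc, <- Hc, <- app_assoc, winv_r, app_nil_r.
    reflexivity. }
  destruct k as [|k]; [lia|].
  assert (Hxk := is_subgroup_wpow H HS x (S k) Hx).
  destruct (lt_total x z Hx Hz) as [E|[L|L]].
  - rewrite E at 1. unfold z.
    rewrite <- !app_assoc, winv_l, app_nil_r. reflexivity.
  - exfalso. apply (lt_irrefl _ Hxk).
    apply (lt_compat (wpow x (S k)) _ (wpow z (S k))); [reflexivity | exact Ezx |].
    now apply lt_wpow.
  - exfalso. apply (lt_irrefl _ Hxk).
    apply (lt_compat (wpow z (S k)) _ (wpow x (S k))); [exact Ezx | reflexivity |].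
    now apply lt_wpow.
Qed.

End BiOrder.

Lemma bi_orderable_commuting_of_commuting_wpow (H : word -> Prop) (x y : word) (k : nat) :
  is_subgroup H -> bi_orderable H ->
  H x -> H y -> 1 <= k -> commuting (wpow x k) y -> commuting x y.
Proof.
  intros HS [lt [Hc [Hi [Ht [Htot [Hl Hr]]]]]].
  exact (commuting_of_commuting_wpow H HS lt Hc Hi Ht Htot Hl Hr x y k).
Qed.

Definition supported_in (L N : nat) (u : word) : Prop :=
  forall l, In l u -> snd l = true /\ L <= fst l /\ fst l + 1 < N.

Lemma supported_in_weaken (L N L' N' : nat) (u : word) :
  L' <= L -> N <= N' -> supported_in L N u -> supported_in L' N' u.
Proof. intros HL HN Hu l Hl. destruct (Hu l Hl) as [? ?]. split; [assumption|lia]. Qed.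

Lemma supported_in_app (L N : nat) (u v : word) :
  supported_in L N u -> supported_in L N v -> supported_in L N (u ++ v).
Proof. intros Hu Hv l Hl. apply in_app_or in Hl as [Hl|Hl]; auto. Qed.

Lemma supported_in_wpow (L N : nat) (u : word) (n : nat) :
  supported_in L N u -> supported_in L N (wpow u n).
Proof. intros Hu l Hl. apply Hu. eapply in_wpow; eauto. Qed.

Lemma supported_in_gens (a b : nat) :
  supported_in a (a + b + 1) (map (fun i => gen i) (seq a b)).
Proof.
  intros l Hl. apply in_map_iff in Hl as [i [<- Hi]]. apply in_seq in Hi. cbn. lia.
Qed.

Lemma perm_of_supported_in (L N : nat) (u : word) (k : nat) :
  supported_in L N u -> k < L \/ N <= k -> perm_of u k = k.
Proof.
  intros Hu [Hk|Hk].
  - apply (perm_of_fix_below u L); [intros l Hl; apply Hu, Hl | exact Hk].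
  - apply (perm_of_fix_above u N); [intros l Hl; apply Hu, Hl | exact Hk].
Qed.

Lemma perm_of_supported_in_lt (N : nat) (u : word) (k : nat) :
  supported_in 0 N u -> k < N -> perm_of u k < N.
Proof.
  intros Hu. apply fix_above_lt; [apply perm_of_inj|].
  intros q Hq. apply (perm_of_supported_in 0 N); auto.
Qed.

Lemma commuting_sym (x y : word) : commuting x y -> commuting y x.
Proof. unfold commuting. intros E. now symmetry. Qed.

Lemma commuting_app_l (x y z : word) : commuting x z -> commuting y z -> commuting (x ++ y) z.
Proof.
  unfold commuting. intros Ex Ey.
  rewrite <- app_assoc, Ey, !app_assoc, Ex. reflexivity.
Qed.

Lemma commuting_app_r (x y z : word) : commuting x y -> commuting x z -> commuting x (y ++ z).
Proof.
  intros Ey Ez. apply commuting_sym, commuting_app_l; now apply commuting_sym.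
Qed.

Lemma commuting_wpow_l (x y : word) (n : nat) : commuting x y -> commuting (wpow x n) y.
Proof.
  intros Exy. induction n as [|n IH]; cbn [wpow].
  - unfold commuting. now rewrite app_nil_r.
  - now apply commuting_app_l.
Qed.

Lemma commuting_conj (b x y : word) :
  commuting x y -> commuting (b ++ x ++ winv b) (b ++ y ++ winv b).
Proof.
  unfold commuting. intros Exy.
  rewrite <- !app_assoc, (app_assoc (winv b) b), winv_l, app_nil_l.
  rewrite (app_assoc (winv b) b), winv_l, app_nil_l, (app_assoc x y), Exy, <- app_assoc.
  reflexivity.
Qed.

Lemma beq_commuting_cons (x : word) (l : letter) (rest : word) :
  commuting x [l] -> beq (x ++ l :: rest) (l :: x ++ rest).
Proof.
  unfold commuting. intros E. change (l :: x ++ rest) with (([l] ++ x) ++ rest).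
  rewrite <- E, <- app_assoc. reflexivity.
Qed.

Lemma wpow_app (u v : word) (n : nat) :
  commuting u v -> beq (wpow (u ++ v) n) (wpow u n ++ wpow v n).
Proof.
  intros Euv. induction n as [|n IH]; cbn [wpow]; [reflexivity|].
  rewrite IH, <- !app_assoc. apply app_mor; [reflexivity|].
  rewrite !app_assoc. apply app_mor; [|reflexivity].
  apply commuting_sym, commuting_wpow_l, Euv.
Qed.

Lemma commuting_gen_far (i : nat) (v : word) :
  (forall l, In l v -> snd l = true /\ far i (fst l)) -> commuting [gen i] v.
Proof.
  unfold commuting. induction v as [|[j b] v IH]; intros Hv; [reflexivity|].
  destruct (Hv (j, b) (or_introl eq_refl)) as [Hb Hij]. cbn in Hb, Hij. subst b.
  cbn [app]. rewrite (beq_step [] (v) _ _ (br_comm i j Hij)). cbn [app].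
  rewrite <- IH; [reflexivity|]. intros l Hl. apply Hv. now right.
Qed.

Lemma commuting_disjoint (L M N : nat) (u v : word) :
  supported_in L M u -> supported_in M N v -> commuting u v.
Proof.
  intros Hu Hv. induction u as [|l u IH].
  - unfold commuting. now rewrite app_nil_r.
  - destruct (Hu l (or_introl eq_refl)) as [Hl HlM]. destruct l as [i b]; cbn in Hl, HlM; subst b.
    apply (commuting_app_l [gen i] u).
    + apply commuting_gen_far. intros l' Hl'. destruct (Hv l' Hl') as [? ?].
      split; [assumption|]. unfold far. lia.
    + apply IH. intros l' Hl'. apply Hu. now right.
Qed.

Definition rot (j : nat) : word := map (fun i => gen i) (seq 0 (S j)).

Lemma rot_succ (j : nat) : rot (S j) = rot j ++ [gen (S j)].
Proof. unfold rot. now rewrite seq_S, map_app. Qed.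

Lemma perm_of_rot (j k : nat) :
  perm_of (rot j) k = if k <=? j then S k else if k =? S j then 0 else k.
Proof.
  revert k. induction j as [|j IH]; intros k.
  - cbn. unfold transp. destruct k as [|[|k]]; reflexivity.
  - rewrite rot_succ, perm_of_app, IH. cbn [perm_of fold_right fst].
    destruct_transp;
    repeat match goal with |- context [?a <=? ?b] => destruct (Nat.leb_spec a b) end;
    repeat match goal with |- context [?a =? ?b] => destruct (Nat.eqb_spec a b) end; lia.
Qed.

Lemma rot_shift (j i : nat) (rest : word) :
  i < j -> beq (rot j ++ gen i :: rest) (gen (S i) :: rot j ++ rest).
Proof.
  intros Hij. set (A := map (fun i => gen i) (seq 0 i)).
  set (C := map (fun i => gen i) (seq (S (S i)) (j - S i))).
  assert (E : rot j = A ++ gen i :: gen (S i) :: C).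
  { unfold rot, A, C. replace (S j) with (i + (2 + (j - S i))) by lia.
    now rewrite seq_app, map_app. }
  assert (HA : commuting A [gen (S i)]).
  { apply (commuting_disjoint 0 (S i) (S (S (S i)))).
    - apply (supported_in_weaken 0 (0 + i + 1)); [lia | lia | apply supported_in_gens].
    - apply (supported_in_weaken (S i) (S i + 1 + 1)); [lia | lia | apply supported_in_gens]. }
  assert (HC : commuting C [gen i]).
  { apply commuting_sym, (commuting_disjoint i (S (S i)) (j + 2)).
    - apply (supported_in_weaken i (i + 1 + 1)); [lia | lia | apply supported_in_gens].
    - apply (supported_in_weaken (S (S i)) (S (S i) + (j - S i) + 1));
        [lia | lia | apply supported_in_gens]. }
  rewrite E, <- !app_assoc. cbn [app].
  rewrite (beq_commuting_cons C _ rest HC), beq_braid, (beq_commuting_cons A).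
  - reflexivity.
  - exact HA.
Qed.

Lemma rot_rot_top (j : nat) (rest : word) :
  beq (rot j ++ rot j ++ gen j :: rest) (gen 0 :: rot j ++ rot j ++ rest).
Proof.
  revert rest. induction j as [|j IH]; intros rest; [reflexivity|].
  set (A := map (fun i => gen i) (seq 0 j)).
  assert (Hrot : forall X, rot j ++ X = A ++ gen j :: X).
  { intros X. unfold rot, A. now rewrite seq_S, map_app, <- app_assoc. }
  assert (Hmove : forall X, beq (gen (S j) :: rot j ++ X) (A ++ gen (S j) :: gen j :: X)).
  { intros X. rewrite Hrot. symmetry. apply beq_commuting_cons.
    apply (commuting_disjoint 0 (S j) (S (S (S j)))).
    - apply (supported_in_weaken 0 (0 + j + 1)); [lia | lia | apply supported_in_gens].
    - apply (supported_in_weaken (S j) (S j + 1 + 1)); [lia | lia | apply supported_in_gens]. }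
  rewrite !rot_succ, <- !app_assoc. cbn [app].
  transitivity (gen 0 :: rot j ++ rot j ++ gen (S j) :: gen j :: rest).
  - rewrite (Hmove (gen (S j) :: gen (S j) :: rest)), <- (beq_braid j (gen (S j) :: rest)).
    rewrite <- Hrot, <- (beq_braid j rest). apply IH.
  - rewrite (Hmove (gen (S j) :: rest)), <- (beq_braid j rest), <- Hrot. reflexivity.
Qed.

Lemma wpow_rot_shift (j m : nat) (rest : word) :
  m <= j -> beq (wpow (rot j) m ++ gen 0 :: rest) (gen m :: wpow (rot j) m ++ rest).
Proof.
  revert rest. induction m as [|m IH]; intros rest Hm; cbn [wpow]; [reflexivity|].
  rewrite <- app_assoc, IH, rot_shift, <- app_assoc by lia. reflexivity.
Qed.

(* [rot j ^ (j + 2)] is the full twist of the first [j + 2] strands, which is central. *)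
Lemma commuting_wpow_rot (j : nat) : commuting (wpow (rot j) (S (S j))) [gen 0].
Proof.
  unfold commuting. cbn [wpow]. rewrite <- !app_assoc. cbn [app].
  rewrite wpow_rot_shift, rot_rot_top, app_nil_r by lia. reflexivity.
Qed.

(* The half twist of the first three strands; its square is the central full twist. *)
Definition tri : word := [gen 0; gen 1; gen 0].

Lemma commuting_wpow_tri : commuting (wpow tri 2) [gen 0].
Proof.
  unfold commuting, tri. cbn.
  rewrite (beq_braid 0 [gen 0]), <- (beq_braid 0 [gen 0; gen 1; gen 0]). reflexivity.
Qed.

Definition twist : word := [gen 0; gen 0].

Lemma commuting_twist (x : word) : commuting x [gen 0] -> commuting x twist.
Proof. intros E. exact (commuting_app_r x [gen 0] [gen 0] E E). Qed.

Lemma perm_of_winv_fix (u : word) (k : nat) : perm_of u k = k -> perm_of (winv u) k = k.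
Proof. intros E. rewrite <- E at 1. apply perm_of_winv_l. Qed.

Lemma perm_of_gens_chain (a d : nat) : perm_of (map (fun i => gen i) (seq a d)) (a + d) = a.
Proof.
  revert a. induction d as [|d IH]; intros a; [cbn; lia|].
  cbn [seq map]. rewrite perm_of_cons. replace (a + S d) with (S a + d) by lia.
  rewrite IH. cbn [fst]. destruct_transp; lia.
Qed.

Lemma perm_realized (N L : nat) (g : nat -> nat) :
  (forall a b, g a = g b -> a = b) -> (forall k, N <= k -> g k = k) ->
  (forall k, k < L -> g k = k) ->
  exists u, supported_in L N u /\ forall k, perm_of u k = g k.
Proof.
  revert g. induction N as [|N IH]; intros g Hinj Hhi Hlo.
  - exists []. split; [intros l []|]. intros k. symmetry. apply Hhi. lia.
  - destruct (lt_dec N L) as [HNL|HLN].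
    + destruct (IH g Hinj) as [u [Hu Hg]]; auto.
      { intros k Hk. destruct (Nat.eq_dec k N) as [->|]; [apply Hlo, HNL | apply Hhi; lia]. }
      exists u. split; [|exact Hg]. apply (supported_in_weaken L N); auto.
    + set (a := g N).
      assert (HaN : a <= N).
      { destruct (le_lt_dec a N) as [|Hlt]; [assumption|]. exfalso.
        specialize (Hinj a N (Hhi a ltac:(lia))). lia. }
      assert (HLa : L <= a).
      { destruct (le_lt_dec L a) as [|Hlt]; [assumption|]. exfalso.
        specialize (Hinj a N (Hlo a Hlt)). lia. }
      set (s := map (fun i => gen i) (seq a (N - a))).
      assert (Hs : supported_in L (S N) s).
      { apply (supported_in_weaken a (a + (N - a) + 1)); [lia | lia | apply supported_in_gens]. }
      assert (HsN : perm_of s N = a).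
      { unfold s. replace N with (a + (N - a)) at 2 by lia. apply perm_of_gens_chain. }
      destruct (IH (fun k => perm_of (winv s) (g k))) as [u [Hu Hg]].
      * intros x y E. now apply Hinj, (perm_of_inj (winv s)).
      * intros k Hk. destruct (Nat.eq_dec k N) as [->|].
        -- fold a. rewrite <- HsN. apply perm_of_winv_l.
        -- rewrite Hhi by lia. apply perm_of_winv_fix.
           apply (perm_of_supported_in L (S N)); [exact Hs | lia].
      * intros k Hk. rewrite Hlo by exact Hk. apply perm_of_winv_fix.
        apply (perm_of_supported_in L (S N)); [exact Hs | lia].
      * exists (s ++ u). split.
        -- apply supported_in_app; [exact Hs|]. apply (supported_in_weaken L N); auto.
        -- intros k. rewrite perm_of_app, Hg. apply perm_of_winv_r.
Qed.

Definition swap (x y k : nat) : nat := if k =? x then y else if k =? y then x else k.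

Fixpoint place (v : nat -> nat) (m : nat) : nat -> nat :=
  match m with
  | 0 => fun k => k
  | S m => fun k => swap (place v m m) (v m) (place v m k)
  end.

Lemma place_spec (n B : nat) (v : nat -> nat) :
  (forall i j, i < n -> j < n -> v i = v j -> i = j) -> (forall i, i < n -> v i < B) ->
  n <= B -> forall m, m <= n ->
  (forall a b, place v m a = place v m b -> a = b) /\
  (forall k, B <= k -> place v m k = k) /\
  (forall j, j < m -> place v m j = v j).
Proof.
  intros Hv HB HnB. induction m as [|m IH]; intros Hm.
  - cbn. split; [auto | split; [auto | intros; lia]].
  - destruct IH as [Hinj [Hfix Hval]]; [lia|]. cbn [place].
    assert (Hmm : place v m m < B) by (apply (fix_above_lt _ B); auto; lia).
    assert (HvB : v m < B) by (apply HB; lia).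
    unfold swap. repeat split.
    + intros a b E. apply Hinj.
      destruct (Nat.eqb_spec (place v m a) (place v m m)),
        (Nat.eqb_spec (place v m a) (v m)), (Nat.eqb_spec (place v m b) (place v m m)),
        (Nat.eqb_spec (place v m b) (v m)); lia.
    + intros k Hk. rewrite (Hfix k Hk).
      destruct (Nat.eqb_spec k (place v m m)), (Nat.eqb_spec k (v m)); lia.
    + intros j Hj. destruct (Nat.eq_dec j m) as [->|Hjm]; [now rewrite Nat.eqb_refl|].
      rewrite Hval by lia.
      destruct (Nat.eqb_spec (v j) (place v m m)) as [E|].
      * rewrite <- Hval in E by lia. apply Hinj in E. lia.
      * destruct (Nat.eqb_spec (v j) (v m)) as [E|]; [|reflexivity].
        apply Hv in E; lia.
Qed.

Lemma exists_word_mapping (n : nat) (v : nat -> nat) :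
  (forall i j, i < n -> j < n -> v i = v j -> i = j) ->
  exists b, forall i, i < n -> perm_of b i = v i.
Proof.
  intros Hv.
  assert (HB : exists B, forall i, i < n -> v i < B).
  { clear Hv. induction n as [|n [B HB]]; [exists 0; lia|].
    exists (B + v n + 1). intros i Hi.
    destruct (Nat.eq_dec i n) as [->|]; [lia|]. specialize (HB i ltac:(lia)). lia. }
  destruct HB as [B HB].
  destruct (place_spec n (B + n) v Hv ltac:(intros i Hi; specialize (HB i Hi); lia)
              ltac:(lia) n (le_n n)) as [Hinj [Hfix Hval]].
  destruct (perm_realized (B + n) 0 (place v n) Hinj Hfix ltac:(lia)) as [b [_ Hb]].
  exists b. intros i Hi. now rewrite Hb, Hval.
Qed.

Lemma extend_above (n : nat) (c1 u : word) :
  supported_in 0 n c1 -> (forall i, i < n -> perm_of u i = perm_of c1 i) ->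
  exists N c2, supported_in n N c2 /\ forall k, perm_of (c1 ++ c2) k = perm_of u k.
Proof.
  intros Hc1 Hu. destruct (perm_of_finite_support u) as [N HN].
  destruct (perm_realized (N + n) n (fun k => perm_of (winv c1) (perm_of u k)))
    as [c2 [Hc2 Hperm]].
  - intros a b E. now apply (perm_of_inj u), (perm_of_inj (winv c1)).
  - intros k Hk. rewrite HN by lia. apply perm_of_winv_fix.
    apply (perm_of_supported_in 0 n); [exact Hc1 | lia].
  - intros k Hk. rewrite Hu by exact Hk. apply perm_of_winv_l.
  - exists (N + n), c2. split; [exact Hc2|].
    intros k. rewrite perm_of_app, Hperm. apply perm_of_winv_r.
Qed.

Add Parametric Morphism : commuting with signature beq ==> beq ==> iff as commuting_mor.
Proof.
  unfold commuting. intros x x' Ex y y' Ey. now rewrite Ex, Ey.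
Qed.

Lemma is_subgroup_of_perm (H : word -> Prop) (w c : word) :
  is_subgroup H -> (forall u, pure u -> H u) -> H w ->
  (forall q, perm_of c q = perm_of w q) -> H c.
Proof.
  intros HS HP Hw Hc. apply (is_subgroup_beq H HS (w ++ winv w ++ c)).
  - rewrite app_assoc, winv_r. reflexivity.
  - apply (is_subgroup_app H HS); [exact Hw|]. apply HP. intros q.
    rewrite perm_of_app, Hc. apply perm_of_winv_l.
Qed.

Lemma perm_of_twist (k : nat) : perm_of twist k = k.
Proof. apply transp_involutive. Qed.

Lemma lk_twist_conj (P Q : nat) (b : word) (lab : nat -> nat) :
  lk P Q (b ++ twist ++ winv b) lab =
  (if same_pair P Q (lab (perm_of b 0)) (lab (perm_of b 1)) then 2 else 0)%Z.
Proof.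
  assert (Hb := beq_lk _ _ (winv_r b) P Q lab). rewrite lk_app in Hb.
  rewrite !lk_app. rewrite (lk_ext P Q (winv b) _ (fun k => lab (perm_of b k))).
  2: { intros k. now rewrite perm_of_twist. }
  cbn [lk twist]. change (transp 0 0) with 1. change (transp 0 1) with 0.
  rewrite (same_pair_sym P Q (lab (perm_of b 1))). cbn in Hb.
  destruct (same_pair _ _ _ _); lia.
Qed.

Lemma not_commuting_twist_conj (b c : word) :
  let P := perm_of b 0 in let Q := perm_of b 1 in
  same_pair P Q (perm_of c P) (perm_of c Q) = false ->
  ~ commuting c (b ++ twist ++ winv b).
Proof.
  intros P Q Hpair Hc.
  assert (E := beq_lk _ _ Hc P Q (fun k => k)). set (y := b ++ twist ++ winv b) in E.
  rewrite !lk_app in E. unfold y in E. rewrite !lk_twist_conj in E.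
  rewrite (lk_ext P Q c (fun k => perm_of (b ++ twist ++ winv b) k) (fun k => k)) in E.
  2: { intros k. now rewrite perm_of_conj, perm_of_twist, perm_of_winv_r. }
  fold P Q in E. rewrite Hpair in E.
  assert (Hs : same_pair P Q P Q = true) by (unfold same_pair; now rewrite !Nat.eqb_refl).
  rewrite Hs in E. lia.
Qed.

Lemma exists_conj_model (w c1 : word) (n : nat) (v : nat -> nat) :
  (forall i j, i < n -> j < n -> v i = v j -> i = j) ->
  supported_in 0 n c1 ->
  (forall i, i < n -> perm_of w (v i) = v (perm_of c1 i)) ->
  exists b N c2, supported_in n N c2 /\ (forall i, i < n -> perm_of b i = v i) /\
    forall q, perm_of (b ++ (c1 ++ c2) ++ winv b) q = perm_of w q.
Proof.
  intros Hv Hc1 Hw. destruct (exists_word_mapping n v Hv) as [b Hb].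
  destruct (extend_above n c1 (winv b ++ w ++ b) Hc1) as [N [c2 [Hc2 Hperm]]].
  - intros i Hi. rewrite !perm_of_app, Hb, Hw, <- Hb by
      (auto using perm_of_supported_in_lt). apply perm_of_winv_l.
  - exists b, N, c2. split; [exact Hc2 | split; [exact Hb |]].
    intros q. rewrite perm_of_conj, Hperm, !perm_of_app, !perm_of_winv_r. reflexivity.
Qed.

Lemma not_bi_orderable_of_model (H : word -> Prop) (w c1 : word) (n k : nat)
    (v : nat -> nat) :
  is_subgroup H -> (forall u, pure u -> H u) -> H w -> 2 <= n -> 1 <= k ->
  (forall i j, i < n -> j < n -> v i = v j -> i = j) ->
  supported_in 0 n c1 ->
  (forall i, i < n -> perm_of w (v i) = v (perm_of c1 i)) ->
  commuting (wpow c1 k) [gen 0] ->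
  2 <= perm_of c1 0 \/ 2 <= perm_of c1 1 ->
  ~ bi_orderable H.
Proof.
  intros HS HP Hw Hn Hk Hv Hc1 Hwv Hcomm1 Hmove Hbo.
  destruct (exists_conj_model w c1 n v Hv Hc1 Hwv) as [b [N [c2 [Hc2 [Hb Hc]]]]].
  set (c := b ++ (c1 ++ c2) ++ winv b). set (y := b ++ twist ++ winv b).
  assert (HcH : H c) by exact (is_subgroup_of_perm H w c HS HP Hw Hc).
  assert (HyH : H y).
  { apply HP. intros q. unfold y. now rewrite perm_of_conj, perm_of_twist, perm_of_winv_r. }
  assert (Hcy : commuting (wpow c k) y).
  { unfold c, y. rewrite wpow_conj. apply commuting_conj.
    rewrite wpow_app by exact (commuting_disjoint 0 n N c1 c2 Hc1 Hc2).
    apply commuting_app_l; [now apply commuting_twist|].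
    apply commuting_sym, (commuting_disjoint 0 2 N).
    - intros l [<-|[<-|[]]]; cbn; lia.
    - apply (supported_in_weaken n N); [lia | lia | now apply supported_in_wpow]. }
  apply (not_commuting_twist_conj b c).
  - rewrite !Hb, !Hc, !Hwv by lia.
    assert (H0 := perm_of_supported_in_lt n c1 0 Hc1 ltac:(lia)).
    assert (H1 := perm_of_supported_in_lt n c1 1 Hc1 ltac:(lia)).
    unfold same_pair.
    destruct (Nat.eqb_spec (v (perm_of c1 0)) (v 0)) as [E0|], (Nat.eqb_spec (v (perm_of c1 1)) (v 1)) as [E1|],
      (Nat.eqb_spec (v (perm_of c1 0)) (v 1)) as [E2|], (Nat.eqb_spec (v (perm_of c1 1)) (v 0)) as [E3|];
      cbn; try reflexivity; exfalso;
      repeat match goal with E : v _ = v _ |- _ => apply Hv in E; [|lia|lia] end; lia.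
  - exact (bi_orderable_commuting_of_commuting_wpow H c y k HS Hbo HcH HyH Hk Hcy).
Qed.

Lemma pigeonhole (N : nat) (g : nat -> nat) :
  (forall i, i <= N -> g i < N) -> exists i j, i < j <= N /\ g i = g j.
Proof.
  intros Hg. set (l := map g (seq 0 (S N))).
  assert (Hnd : ~ NoDup l).
  { intros Hnd. enough (length l <= N) by (unfold l in *; rewrite length_map, length_seq in *; lia).
    rewrite <- (length_seq N 0). apply NoDup_incl_length; [exact Hnd|].
    intros x Hx. unfold l in Hx. apply in_map_iff in Hx as [i [<- Hi]].
    apply in_seq in Hi. apply in_seq. specialize (Hg i ltac:(lia)). lia. }
  apply NNPP. intros Hno. apply Hnd, (NoDup_nth l (g 0)). unfold l.
  rewrite length_map, length_seq. intros i j Hi Hj E.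
  rewrite !map_nth, !seq_nth in E by assumption.
  destruct (lt_eq_lt_dec i j) as [[Hij|]|Hji]; [exfalso | assumption | exfalso]; apply Hno.
  - exists i, j. split; [lia | exact E].
  - exists j, i. split; [lia | now symmetry].
Qed.

Lemma orbit_cycle (w : word) (a : nat) :
  perm_of w a <> a ->
  exists p, 2 <= p /\ Nat.iter p (perm_of w) a = a /\
    forall i j, i < p -> j < p ->
      Nat.iter i (perm_of w) a = Nat.iter j (perm_of w) a -> i = j.
Proof.
  intros Ha. set (f := perm_of w).
  assert (Hiter_inj : forall i x y, Nat.iter i f x = Nat.iter i f y -> x = y).
  { induction i as [|i IH]; cbn; intros x y E; [exact E|]. now apply IH, (perm_of_inj w). }
  assert (Hreturn : forall i j, i < j -> Nat.iter i f a = Nat.iter j f a ->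
                                Nat.iter (j - i) f a = a).
  { intros i j Hij E. replace j with (i + (j - i)) in E by lia.
    rewrite Nat.iter_add in E. symmetry. exact (Hiter_inj i _ _ E). }
  destruct (perm_of_finite_support w) as [N HN].
  assert (Horbit : forall i, Nat.iter i f a < N).
  { assert (HaN : a < N) by (destruct (le_lt_dec N a); [now elim Ha; apply HN | assumption]).
    induction i as [|i IH]; [exact HaN|].
    apply (fix_above_lt f N); [apply perm_of_inj | exact HN | exact IH]. }
  destruct (pigeonhole N (fun i => Nat.iter i f a) (fun i _ => Horbit i))
    as [i [j [Hij Eij]]].
  destruct (dec_inh_nat_subset_has_unique_least_element
              (fun d => 1 <= d /\ Nat.iter d f a = a)) as [p [[[Hp1 Hpa] Hmin] _]].
  - intros d. apply classic.
  - exists (j - i). split; [lia | now apply Hreturn].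
  - exists p. split; [|split; [exact Hpa|]].
    + destruct (Nat.eq_dec p 1) as [->|]; [now elim Ha | lia].
    + assert (Hlt : forall x y, x < y < p -> Nat.iter x f a = Nat.iter y f a -> False).
      { intros x y Hxy E.
        assert (Hle : p <= y - x) by (apply Hmin; split; [lia | apply (Hreturn x y); [lia | exact E]]).
        lia. }
      intros x y Hx Hy E. destruct (lt_eq_lt_dec x y) as [[Hxy|]|Hyx]; [| assumption |].
      * elim (Hlt x y); [lia | exact E].
      * elim (Hlt y x); [lia | now symmetry].
Qed.

Lemma not_bi_orderable_of_2cycle (H : word -> Prop) (w : word) (a : nat) :
  is_subgroup H -> (forall u, pure u -> H u) -> H w ->
  perm_of w a <> a -> perm_of w (perm_of w a) = a -> ~ bi_orderable H.
Proof.
  intros HS HP Hw Ha Ha2. set (f := perm_of w) in *.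
  destruct (perm_of_finite_support w) as [N HN]. fold f in HN.
  assert (HaN : a < N) by (destruct (le_lt_dec N a); [now elim Ha; apply HN | assumption]).
  assert (HfaN : f a < N).
  { destruct (le_lt_dec N (f a)) as [Hle|]; [|assumption].
    elim Ha. rewrite <- Ha2 at 2. symmetry. now apply HN. }
  apply (not_bi_orderable_of_model H w tri 3 2
           (fun i => match i with 0 => a | 1 => N | _ => f a end)); auto.
  - intros [|[|[|i]]] [|[|[|j]]] Hi Hj E; cbn in E; try lia; congruence.
  - intros l [<-|[<-|[<-|[]]]]; cbn; lia.
  - intros [|[|[|i]]] Hi; cbn -[f]; [reflexivity | now apply HN | exact Ha2 | lia].
  - exact commuting_wpow_tri.
Qed.

Lemma not_bi_orderable_of_long_cycle (H : word -> Prop) (w : word) (a p : nat) :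
  is_subgroup H -> (forall u, pure u -> H u) -> H w -> 3 <= p ->
  Nat.iter p (perm_of w) a = a ->
  (forall i j, i < p -> j < p -> Nat.iter i (perm_of w) a = Nat.iter j (perm_of w) a -> i = j) ->
  ~ bi_orderable H.
Proof.
  intros HS HP Hw Hp Hpa Hdist.
  apply (not_bi_orderable_of_model H w (rot (p - 2)) p p
           (fun i => Nat.iter i (perm_of w) a)); auto; try lia.
  - apply (supported_in_weaken 0 (0 + S (p - 2) + 1)); [lia | lia | apply supported_in_gens].
  - intros i Hi. rewrite perm_of_rot.
    destruct (Nat.leb_spec i (p - 2)); [reflexivity|].
    replace i with (S (p - 2)) by lia. rewrite Nat.eqb_refl.
    change (Nat.iter (S (S (p - 2))) (perm_of w) a = a).
    replace (S (S (p - 2))) with p by lia. exact Hpa.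
  - replace p with (S (S (p - 2))) at 2 by lia. apply commuting_wpow_rot.
  - right. rewrite perm_of_rot. destruct (Nat.leb_spec 1 (p - 2)); lia.
Qed.

Theorem mainTheorem13 (H : word -> Prop) :
  is_subgroup H ->
  (forall w, pure w -> H w) ->
  (exists w, H w /\ ~ pure w) ->
  ~ bi_orderable H.
Proof.
  intros HS HP [w [Hw Hnp]].
  destruct (not_all_ex_not _ _ Hnp) as [a Ha].
  destruct (orbit_cycle w a Ha) as [p [Hp [Hpa Hdist]]].
  destruct (Nat.eq_dec p 2) as [->|Hp2].
  - exact (not_bi_orderable_of_2cycle H w a HS HP Hw Ha Hpa).
  - apply (not_bi_orderable_of_long_cycle H w a p); auto. lia.
Qed.
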